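(* Let $F$, $H$, $X$, $\Omega$, $Q$ and the sequences generated by the IneIREG method be as described in the context, and suppose $H$ is $\mu$-strongly monotone for some $\mu>0$. Suppose $\eta_k\equiv\eta>0$; $\lambda_k\in[\underline\lambda,\overline\lambda]$ for all $k\ge0$ with $0<\underline\lambda\le\overline\lambda<1/L$, $L:=L_F+\eta L_H$; and $\alpha_0\in[0,1]$ and $\alpha_{k+1}\le(1-\beta_k)\alpha_k$ for all $k\ge0$, where $\beta_k:=\big(\frac{1}{1-\lambda_k^2L^2}+\frac{1}{2\lambda_k\eta\mu}\big)^{-1}$. Define $p_{-1}:=1$, $p_k:=\big(\prod_{i=0}^k(1-\beta_i)\big)^{-1}$ for $k\ge0$, for $k\ge1$ $\Lambda_k:=\sum_{j=0}^{k-1}\lambda_j\eta p_j$ and $\overline y_k:=\Lambda_k^{-1}\sum_{j=0}^{k-1}\lambda_j\eta p_jy_j$, and $\beta:=\big(\frac{1}{1-\overline\lambda^2L^2}+\frac{1}{2\underline\lambda\eta\mu}\big)^{-1}\in(0,1)$. Then for all $k\ge1$, $$0\le\mathrm{Gap}(\overline y_k,F,X)\le\frac{(1-\beta)^k}{2\underline\lambda}\Big(D_X^2+\sum_{j=0}^{k-1}p_{j-1}\delta_j\Big)+\eta\Big(\frac{\overline\lambda C_HD_X}{\underline\lambda}\Big).$$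
   Context: Work in $\mathbb{R}^n$ with Euclidean inner product $\langle\cdot,\cdot\rangle$ and norm $\|\cdot\|$. The maps $F\colon \mathrm{Dom}\,F\to\mathbb{R}^n$ and $H\colon\mathrm{Dom}\,H\to\mathbb{R}^n$ are monotone and Lipschitz continuous with constants $L_F>0$ and $L_H>0$; $H$ is $\mu$-strongly monotone means $\langle H(x)-H(y),x-y\rangle\ge\mu\|x-y\|^2$ for all $x,y\in\mathrm{Dom}\,H$. $X$ is a nonempty compact convex set and $\Omega$ a nonempty closed convex set with $X\subset\Omega\subset\mathrm{Dom}\,F\cap\mathrm{Dom}\,H$; $P_X,P_\Omega$ denote orthogonal projections. $Q:=\{x\in X:\langle F(x),y-x\rangle\ge0\ \forall y\in X\}$ is assumed nonempty. $D_X:=\sup_{x,y\in X}\|x-y\|$, $C_H:=\sup_{x\in X}\|H(x)\|$. $\mathrm{Gap}(z,F,X):=\sup_{x\in X}\langle F(x),z-x\rangle$. IneIREG method: start with $x_0=x_{-1}\in X$; for $k=0,1,\dots$, with parameters $\alpha_k\ge0$, $\lambda_k>0$, $\eta_k>0$, set $w_k=x_k+\alpha_k(x_k-x_{k-1})$, $w'_k=P_\Omega(w_k)$, $y_k=P_X\big(w_k-\lambda_k(F(w'_k)+\eta_kH(w'_k))\big)$, $x_{k+1}=P_X\big(w_k-\lambda_k(F(y_k)+\eta_kH(y_k))\big)$. Also $\delta_k:=\alpha_k(1+\alpha_k)\|x_k-x_{k-1}\|^2$ for $k\ge0$. *)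

From HB Require Import structures.
From mathcomp Require Import all_boot all_order all_algebra.
From mathcomp Require Import all_classical all_reals all_analysis.
Set Implicit Arguments. Unset Strict Implicit. Unset Printing Implicit Defensive.
Import Order.TTheory GRing.Theory Num.Theory.
Import numFieldNormedType.Exports.
Local Open Scope classical_set_scope.
Local Open Scope ring_scope.

Section Defs.
Variables (R : realType) (n : nat).
Notation vec := 'rV[R]_n.

Definition dot (u v : vec) : R := \sum_(i < n) u 0 i * v 0 i.
Definition enorm (u : vec) : R := Num.sqrt (dot u u).

Definition is_convex (C : set vec) : Prop :=
  forall x y t, C x -> C y -> 0 <= t -> t <= 1 -> C (t *: x + (1 - t) *: y).

Definition op_monotone_on (D : set vec) (G : vec -> vec) : Prop :=
  forall x y, D x -> D y -> 0 <= dot (G x - G y) (x - y).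

Definition op_strongly_monotone_on (D : set vec) (G : vec -> vec) (mu : R) : Prop :=
  forall x y, D x -> D y -> mu * enorm (x - y) ^+ 2 <= dot (G x - G y) (x - y).

Definition op_lipschitz_on (D : set vec) (G : vec -> vec) (L : R) : Prop :=
  forall x y, D x -> D y -> enorm (G x - G y) <= L * enorm (x - y).

Definition is_proj (C : set vec) (P : vec -> vec) : Prop :=
  forall x, C (P x) /\ (forall y, C y -> enorm (x - P x) <= enorm (x - y)).

Definition VI_sol (F : vec -> vec) (X : set vec) : set vec :=
  [set x | X x /\ forall y, X y -> 0 <= dot (F x) (y - x)].

Definition Gap (z : vec) (F : vec -> vec) (X : set vec) : R :=
  sup [set r | exists2 x, X x & r = dot (F x) (z - x)].

Definition diam (X : set vec) : R :=
  sup [set r | exists x y, [/\ X x, X y & r = enorm (x - y)]].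

Definition supnorm (H : vec -> vec) (X : set vec) : R :=
  sup [set r | exists2 x, X x & r = enorm (H x)].

(* IneIREG iterates; x : nat -> vec with x_{-1} := x_0, encoded by x (k.-1). *)
Definition IneIREG (X Omega : set vec) (PX POm : vec -> vec) (F H : vec -> vec)
  (alpha lambda eta : nat -> R) (x w w' y : nat -> vec) : Prop :=
  [/\ X (x 0),
      forall k, w k = x k + alpha k *: (x k - x k.-1),
      forall k, w' k = POm (w k),
      forall k, y k = PX (w k - lambda k *: (F (w' k) + eta k *: H (w' k))) &
      forall k, x k.+1 = PX (w k - lambda k *: (F (y k) + eta k *: H (y k)))].

Definition delta (alpha : nat -> R) (x : nat -> vec) (k : nat) : R :=
  alpha k * (1 + alpha k) * enorm (x k - x k.-1) ^+ 2.

Definition betak (L eta mu : R) (lambda : nat -> R) (k : nat) : R :=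
  ((1 - lambda k ^+ 2 * L ^+ 2)^-1 + (2 * lambda k * eta * mu)^-1)^-1.

Definition pk (L eta mu : R) (lambda : nat -> R) (k : nat) : R :=
  (\prod_(i < k.+1) (1 - betak L eta mu lambda i))^-1.

(* pprev j = p_{j-1}, with p_{-1} = 1 *)
Definition pprev (L eta mu : R) (lambda : nat -> R) (j : nat) : R :=
  if j is j'.+1 then pk L eta mu lambda j' else 1.

Definition Lambda (L eta mu : R) (lambda : nat -> R) (k : nat) : R :=
  \sum_(j < k) lambda j * eta * pk L eta mu lambda j.

Definition ybar (L eta mu : R) (lambda : nat -> R) (y : nat -> vec) (k : nat) : vec :=
  (Lambda L eta mu lambda k)^-1 *:
    \sum_(j < k) (lambda j * eta * pk L eta mu lambda j) *: y j.

End Defs.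

From HB Require Import structures.
From mathcomp Require Import all_boot all_order all_algebra.
From mathcomp Require Import all_classical all_reals all_analysis.
From mathcomp Require Import ring lra.
Set Implicit Arguments. Unset Strict Implicit. Unset Printing Implicit Defensive.
Import Order.TTheory GRing.Theory Num.Theory.
Import numFieldNormedType.Exports.
Local Open Scope classical_set_scope.
Local Open Scope ring_scope.

(* For every z in X, one step of the method satisfies
     |x_{k+1} - z|^2 <= (1 - beta_k) |w_k - z|^2 + 2 lambda_k <F z + eta H z, z - y_k>:
   the three-point inequalities of the two projections onto X leave the cross
   term <G w'_k - G y_k, x_{k+1} - y_k>, which Lipschitz continuity of
   G = F + eta H absorbs into -(1 - lambda_k^2 L^2) |w_k - y_k|^2, strong
   monotonicity of eta H gives -2 lambda_k eta mu |y_k - z|^2, and the two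
   negative terms merge into -beta_k |w_k - z|^2.  Expanding the inertial point
   w_k and multiplying by p_k = p_{k-1} / (1 - beta_k), the estimates telescope
   (using that alpha_k p_{k-1} is nonincreasing) to
     p_{k-1} |x_k - z|^2 <= D_X^2 + sum_{j<k} (p_{j-1} delta_j
                              + 2 p_j lambda_j <F z + eta H z, z - y_j>).
   Nonnegativity of the left side bounds the (lambda_j p_j)-weighted sum of
   <F z, y_j - z>; dividing by Lambda_k >= eta lamlo (1 - beta)^-k gives the
   bound at the ergodic average, each <H z, z - y_j> contributing at most
   C_H D_X. *)

Section InnerProduct.
Variables (R : realType) (n : nat).
Notation vec := 'rV[R]_n.
Implicit Types (u v z : vec) (a : R).

Lemma dotC u v : dot u v = dot v u.
Proof. by apply: eq_bigr => i _; rewrite mulrC. Qed.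

Lemma dotDl u v z : dot (u + v) z = dot u z + dot v z.
Proof. by rewrite /dot -big_split; apply: eq_bigr => i _; rewrite mxE mulrDl. Qed.

Lemma dotZl a u v : dot (a *: u) v = a * dot u v.
Proof. by rewrite /dot mulr_sumr; apply: eq_bigr => i _; rewrite mxE mulrA. Qed.

Lemma dotNl u v : dot (- u) v = - dot u v.
Proof. by rewrite -scaleN1r dotZl mulN1r. Qed.

Lemma dotBl u v z : dot (u - v) z = dot u z - dot v z.
Proof. by rewrite dotDl dotNl. Qed.

Lemma dotDr u v z : dot z (u + v) = dot z u + dot z v.
Proof. by rewrite dotC dotDl !(dotC z). Qed.

Lemma dotZr a u v : dot v (a *: u) = a * dot v u.
Proof. by rewrite dotC dotZl dotC. Qed.

Lemma dotNr u v : dot v (- u) = - dot v u.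
Proof. by rewrite dotC dotNl dotC. Qed.

Lemma dotBr u v z : dot z (u - v) = dot z u - dot z v.
Proof. by rewrite dotC dotBl !(dotC z). Qed.

Lemma dot0r u : dot u 0 = 0.
Proof. by rewrite -(scale0r 0) dotZr mul0r. Qed.

Lemma dot_sumr (I : Type) (r : seq I) (P : pred I) (f : I -> vec) u :
  dot u (\sum_(i <- r | P i) f i) = \sum_(i <- r | P i) dot u (f i).
Proof. exact: (big_morph (dot u) (fun v z => dotDr v z u) (dot0r u)). Qed.

Lemma dotvv_ge0 u : 0 <= dot u u.
Proof. by apply: sumr_ge0 => i _; rewrite -expr2 sqr_ge0. Qed.

Lemma dotvv_eq0 u : (dot u u == 0) = (u == 0).
Proof.
apply/idP/eqP => [/eqP uu0|->]; last by rewrite dot0r.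
have /psumr_eq0P u2_0 : forall i : 'I_n, true -> 0 <= u 0 i * u 0 i.
  by move=> i _; rewrite -expr2 sqr_ge0.
apply/rowP => i; have /eqP := u2_0 uu0 i isT.
by rewrite mulf_eq0 orbb mxE => /eqP.
Qed.

Lemma dotBB u v : dot (u - v) (u - v) = dot u u - 2 * dot u v + dot v v.
Proof. by rewrite !dotBl !dotBr (dotC v u); ring. Qed.

Lemma dotDD u v : dot (u + v) (u + v) = dot u u + 2 * dot u v + dot v v.
Proof. by rewrite !dotDl !dotDr (dotC v u); ring. Qed.

Lemma dotBBC u v : dot (u - v) (u - v) = dot (v - u) (v - u).
Proof. by rewrite !dotBB (dotC v u); ring. Qed.

Lemma dot_polar u v z :
  2 * dot (u - z) (v - z) = dot (u - z) (u - z) + dot (v - z) (v - z) - dot (u - v) (u - v).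
Proof.
have -> : u - v = (u - z) - (v - z) by rewrite opprB addrA subrK.
by rewrite (dotBB (u - z)); ring.
Qed.

Lemma dot_extrapolate a u v :
  dot ((1 + a) *: u - a *: v) ((1 + a) *: u - a *: v) =
  (1 + a) * dot u u - a * dot v v + a * (1 + a) * dot (u - v) (u - v).
Proof. by rewrite !dotBB !dotZl !dotZr; ring. Qed.

Lemma enorm_ge0 u : 0 <= enorm u.
Proof. exact: sqrtr_ge0. Qed.

Lemma enorm_sqr u : enorm u ^+ 2 = dot u u.
Proof. by rewrite sqr_sqrtr // dotvv_ge0. Qed.

Lemma ler_enorm u v : (enorm u <= enorm v) = (dot u u <= dot v v).
Proof. exact: ler_sqrt (dotvv_ge0 v). Qed.

Lemma enormZ a u : enorm (a *: u) = `|a| * enorm u.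
Proof. by rewrite /enorm dotZl dotZr mulrA -expr2 sqrtrM ?sqr_ge0 // sqrtr_sqr. Qed.

Lemma dot_le_enorm u v : dot u v <= enorm u * enorm v.
Proof.
have [->|u0] := eqVneq u 0; first by rewrite dotC dot0r mulr_ge0 ?enorm_ge0.
have [->|v0] := eqVneq v 0; first by rewrite dot0r mulr_ge0 ?enorm_ge0.
have enorm_gt0 z : z != 0 -> 0 < enorm z.
  by move=> z0; rewrite sqrtr_gt0 lt_def dotvv_eq0 z0 dotvv_ge0.
have := dotvv_ge0 (enorm v *: u - enorm u *: v).
rewrite dotBB !dotZl !dotZr -!enorm_sqr.
have := mulr_gt0 (enorm_gt0 _ u0) (enorm_gt0 _ v0); nra.
Qed.

Lemma enormD u v : enorm (u + v) <= enorm u + enorm v.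
Proof.
rewrite -(ler_pXn2r (_ : 0 < 2)%N) ?nnegrE ?addr_ge0 ?enorm_ge0 //.
by rewrite enorm_sqr dotDD -!enorm_sqr; have := dot_le_enorm u v; lra.
Qed.

Lemma enormB u v : enorm (u - v) <= enorm u + enorm v.
Proof. by have := enormD u (- v); rewrite -scaleN1r enormZ normrN1 mul1r. Qed.

End InnerProduct.

Section Projection.
Variables (R : realType) (n : nat).
Notation vec := 'rV[R]_n.
Variables (C : set vec) (P : vec -> vec).
Hypotheses (cvxC : is_convex C) (projC : is_proj C P).

Lemma proj_variational (x z : vec) : C z -> dot (x - P x) (z - P x) <= 0.
Proof.
move=> Cz; have [CPx Pmin] := projC x.
set d := x - P x; set e := z - P x.
have descent t : 0 < t -> t <= 1 -> 2 * dot d e <= t * dot e e.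
  move=> t0 t1; have := Pmin _ (cvxC Cz CPx (ltW t0) t1).
  have -> : x - (t *: z + (1 - t) *: P x) = d - t *: e.
    by apply/rowP => i; rewrite !mxE; ring.
  rewrite -/d ler_enorm (dotBB d) dotZr dotZl dotZr => h.
  by rewrite -(ler_pM2l t0); nra.
(* if <d, e> > 0, the step t = <d, e> / (<d, e> + |e|^2) contradicts [descent] *)
rewrite leNgt; apply/negP => de_gt0; have ee_ge0 := dotvv_ge0 e.
have t0 : 0 < dot d e / (dot d e + dot e e) by rewrite divr_gt0 // ltr_wpDr.
have := descent _ t0; rewrite ler_pdivrMr ?ltr_wpDr // mul1r lerDl => /(_ ee_ge0).
rewrite mulrAC ler_pdivlMr ?ltr_wpDr //; nra.
Qed.

Lemma proj_three_point (a g : vec) l q (p := P (a - l *: g)) : C q ->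
  dot (a - p) (a - p) + dot (q - p) (q - p) - dot (a - q) (a - q) <= 2 * l * dot g (q - p).
Proof.
move=> Cq; rewrite -dot_polar.
have := proj_variational (a - l *: g) Cq; rewrite -/p.
have -> : a - l *: g - p = (a - p) - l *: g by rewrite addrAC.
by rewrite (dotBl (a - p)) dotZl; lra.
Qed.

Lemma proj_dist_le (a q : vec) : C q -> dot (P a - q) (P a - q) <= dot (a - q) (a - q).
Proof.
move=> Cq; have := proj_three_point a 0 0 Cq.
rewrite scale0r subr0 mulr0 mul0r (dotBBC (P a)); have := dotvv_ge0 (a - P a); lra.
Qed.

End Projection.

Section ParallelSum.
Variable R : realFieldType.
Implicit Types a b s t : R.

(* The parallel sum; [betak L eta mu lambda k] is
   [parsum (1 - lambda k ^+ 2 * L ^+ 2) (2 * lambda k * eta * mu)]. *)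
Definition parsum a b : R := (a^-1 + b^-1)^-1.

Lemma parsumE a b : 0 < a -> 0 < b -> parsum a b = a * b / (a + b).
Proof. by move=> a0 b0; rewrite /parsum; field; rewrite ?gt_eqF //; lra. Qed.

Lemma parsum_gt0 a b : 0 < a -> 0 < b -> 0 < parsum a b.
Proof. by move=> a0 b0; rewrite parsumE // divr_gt0 ?mulr_gt0 ?addr_gt0. Qed.

Lemma parsum_ltl a b : 0 < a -> 0 < b -> parsum a b < a.
Proof. by move=> a0 b0; rewrite parsumE // ltr_pdivrMr ?addr_gt0 //; nra. Qed.

Lemma ler_parsum a b a' b' : 0 < a -> 0 < b -> a <= a' -> b <= b' ->
  parsum a b <= parsum a' b'.
Proof.
move=> a0 b0 aa' bb'; have a'0 : 0 < a' := lt_le_trans a0 aa'.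
have b'0 : 0 < b' := lt_le_trans b0 bb'.
rewrite lef_pV2 ?posrE ?addr_gt0 ?invr_gt0 //.
by rewrite lerD // lef_pV2.
Qed.

Lemma parsum_sqrD a b s t : 0 < a -> 0 < b ->
  parsum a b * (s + t) ^+ 2 <= a * s ^+ 2 + b * t ^+ 2.
Proof.
move=> a0 b0; rewrite parsumE // mulrAC ler_pdivrMr ?addr_gt0 //.
by have := sqr_ge0 (a * s - b * t); nra.
Qed.

Lemma parsum_stepsize_bounds (L eta mu lo hi l : R) :
  0 <= L -> 0 < eta -> 0 < mu -> 0 < lo -> lo <= l <= hi -> hi * L < 1 ->
  0 < parsum (1 - hi ^+ 2 * L ^+ 2) (2 * lo * eta * mu) /\
  parsum (1 - hi ^+ 2 * L ^+ 2) (2 * lo * eta * mu)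
    <= parsum (1 - l ^+ 2 * L ^+ 2) (2 * l * eta * mu) < 1.
Proof.
move=> L0 eta0 mu0 lo0 /andP[lo_l l_hi] hiL.
have l0 := lt_le_trans lo0 lo_l; have hi0 := lt_le_trans l0 l_hi.
have hi_gt0 : 0 < 1 - hi ^+ 2 * L ^+ 2.
  by rewrite subr_gt0 -exprMn expr_lt1 // (mulr_ge0 (ltW hi0) L0).
have hi_le_l : 1 - hi ^+ 2 * L ^+ 2 <= 1 - l ^+ 2 * L ^+ 2.
  by rewrite lerB // ler_wpM2r ?sqr_ge0 // lerXn2r ?nnegrE // ltW.
have lo_le_l : 2 * lo * eta * mu <= 2 * l * eta * mu.
  by rewrite !ler_pM2r // ler_pM2l.
have lo_gt0 : 0 < 2 * lo * eta * mu by rewrite !mulr_gt0.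
split; first exact: parsum_gt0.
rewrite ler_parsum //=; apply: lt_le_trans (parsum_ltl _ _) _.
- exact: lt_le_trans hi_le_l.
- exact: lt_le_trans lo_le_l.
- by rewrite lerBlDr lerDl mulr_ge0 ?sqr_ge0.
Qed.

End ParallelSum.

Section ExtragradientStep.
Variables (R : realType) (n : nat).
Notation vec := 'rV[R]_n.
Variables (F H : vec -> vec) (DomF DomH X Omega : set vec) (PX POm : vec -> vec).
Variables (LF LH mu eta lam : R).
Hypotheses (monF : op_monotone_on DomF F) (LipF : op_lipschitz_on DomF F LF).
Hypotheses (LipH : op_lipschitz_on DomH H LH) (smH : op_strongly_monotone_on DomH H mu).
Hypotheses (cvxX : is_convex X) (cvxO : is_convex Omega).
Hypotheses (projX : is_proj X PX) (projO : is_proj Omega POm).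
Hypotheses (XO : X `<=` Omega) (OD : Omega `<=` DomF `&` DomH).
Hypotheses (LF0 : 0 <= LF) (LH0 : 0 <= LH) (eta0 : 0 < eta) (mu0 : 0 < mu).
Hypotheses (lam0 : 0 < lam) (lamL : lam * (LF + eta * LH) < 1).

Let G v := F v + eta *: H v.
Let L := LF + eta * LH.
Let L_ge0 : 0 <= L := addr_ge0 LF0 (mulr_ge0 (ltW eta0) LH0).

Let G_sub u v : G u - G v = (F u - F v) + eta *: (H u - H v).
Proof. by rewrite /G scalerBr addrACA opprD. Qed.

Lemma regularized_lipschitz : op_lipschitz_on Omega G L.
Proof.
move=> u v /OD[Fu Hu] /OD[Fv Hv]; rewrite G_sub (le_trans (enormD _ _)) //.
rewrite enormZ gtr0_norm // /L mulrDl -mulrA.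
by apply: lerD; [exact: LipF | rewrite ler_pM2l // LipH].
Qed.

Lemma regularized_strongly_monotone : op_strongly_monotone_on Omega G (eta * mu).
Proof.
move=> u v /OD[Fu Hu] /OD[Fv Hv]; rewrite G_sub dotDl dotZl -mulrA.
rewrite -[X in X <= _]add0r.
by apply: lerD; [exact: monF | rewrite ler_pM2l // smH].
Qed.

Let a_gt0 : 0 < 1 - lam ^+ 2 * L ^+ 2.
Proof. by rewrite subr_gt0 -exprMn expr_lt1 // (mulr_ge0 (ltW lam0) L_ge0). Qed.

Lemma extragradient_cross (w x' y : vec) : Omega y ->
  2 * lam * dot (G (POm w) - G y) (x' - y)
    <= lam ^+ 2 * L ^+ 2 * dot (w - y) (w - y) + dot (x' - y) (x' - y).
Proof.
move=> Oy; set d := enorm (POm w - y); set e := enorm (x' - y).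
have cross : dot (G (POm w) - G y) (x' - y) <= L * d * e.
  apply: le_trans (dot_le_enorm _ _) _.
  by apply: ler_wpM2r; [exact: enorm_ge0 | exact: regularized_lipschitz (projO w).1 Oy].
have d_le : d ^+ 2 <= dot (w - y) (w - y).
  by rewrite enorm_sqr (proj_dist_le cvxO projO w Oy).
have amgm := sqr_ge0 (lam * L * d - e).
rewrite -(enorm_sqr (x' - y)) -/e.
have := ler_wpM2l (sqr_ge0 (lam * L)) d_le; have := ler_wpM2l (ltW lam0) cross.
move: (dot (w - y) _) (dot (G (POm w) - G y) _) => W c h1 h2.
nra.
Qed.

Lemma extragradient_step (w z : vec) (y := PX (w - lam *: G (POm w)))
  (x' := PX (w - lam *: G y)) : X z ->
  dot (x' - z) (x' - z) <=
    (1 - parsum (1 - lam ^+ 2 * L ^+ 2) (2 * lam * eta * mu)) * dot (w - z) (w - z)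
    + 2 * lam * dot (G z) (z - y).
Proof.
move=> Xz; have Xy : X y := (projX _).1; have Xx' : X x' := (projX _).1.
have lip_cross := extragradient_cross w x' (XO Xy).
have mon : dot (G y) (z - y) <= dot (G z) (z - y) - eta * mu * dot (y - z) (y - z).
  have := regularized_strongly_monotone (XO Xy) (XO Xz).
  rewrite enorm_sqr -(opprB y z) !dotNr (dotBl (G y)).
  move: (dot (G y) _) (dot (G z) _) (dot (y - z) _) => a b c.
  lra.
have b0 : 0 < 2 * lam * eta * mu by rewrite !mulr_gt0.
have tri : parsum (1 - lam ^+ 2 * L ^+ 2) (2 * lam * eta * mu) * dot (w - z) (w - z)
    <= (1 - lam ^+ 2 * L ^+ 2) * dot (w - y) (w - y)
       + 2 * lam * eta * mu * dot (y - z) (y - z).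
  rewrite -!enorm_sqr; apply: le_trans (parsum_sqrD _ _ a_gt0 b0).
  rewrite ler_pM2l ?parsum_gt0 // lerXn2r ?nnegrE ?addr_ge0 ?enorm_ge0 //.
  have -> : w - z = (w - y) + (y - z) by rewrite addrA subrK.
  exact: enormD.
have A : dot (w - x') (w - x') + dot (x' - z) (x' - z) - dot (w - z) (w - z)
    <= 2 * lam * (dot (G y) (z - y) - dot (G y) (x' - y)).
  rewrite -dotBr opprB addrA subrK (dotBBC x').
  exact (proj_three_point cvxX projX w (G y) lam Xz).
have B : dot (w - y) (w - y) + dot (x' - y) (x' - y) - dot (w - x') (w - x')
    <= 2 * lam * (dot (G y) (x' - y) + dot (G (POm w) - G y) (x' - y)).
  rewrite (dotBl (G (POm w))) addrCA subrr addr0.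
  exact (proj_three_point cvxX projX w (G (POm w)) lam Xx').
move: A B lip_cross tri (ler_wpM2l (ltW lam0) mon) => {mon b0}.
(* abstracting the inner products as reals keeps lra fast *)
repeat match goal with |- context [dot ?u ?v] => move: (dot u v) => ? end.
lra.
Qed.

End ExtragradientStep.

Section BoundedSets.
Variables (R : realType) (n : nat).
Notation vec := 'rV[R]_n.

Definition enorm_bounded (A : set vec) := exists M, forall v, A v -> enorm v <= M.

Lemma ler_coord_norm (v : vec) i : `|v 0 i| <= `|v|.
Proof. by rewrite [`|v|]mx_normrE (le_bigmax _ (fun ij => `|v ij.1 ij.2|) (0, i)). Qed.

Lemma dotvv_le_norm (v : vec) : dot v v <= `|v| ^+ 2 *+ n.
Proof.
rewrite -[in X in _ *+ X](card_ord n) -sumr_const; apply: ler_sum => i _.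
by rewrite -expr2 -real_normK ?num_real // lerXn2r ?nnegrE ?ler_coord_norm.
Qed.

Lemma compact_enorm_bounded (A : set vec) : compact A -> enorm_bounded A.
Proof.
move=> /compact_bounded [M [_ normM]]; exists (Num.sqrt ((M + 1) ^+ 2 *+ n)) => v Av.
have vM : `|v| <= M + 1 by apply: normM => //; rewrite ltrDl.
rewrite ler_sqrt ?mulrn_wge0 ?sqr_ge0 // (le_trans (dotvv_le_norm v)) //.
by rewrite lerMn2r lerXn2r ?nnegrE ?orbT // (le_trans (normr_ge0 v)).
Qed.

Lemma lipschitz_image_bounded (D A : set vec) G L : op_lipschitz_on D G L ->
  0 <= L -> A `<=` D -> enorm_bounded A -> enorm_bounded (G @` A).
Proof.
move=> LipG L0 AD [M normM]; have [[a0 Aa0]|A0] := pselect (A !=set0); last first.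
  by exists 0 => u [v Av _]; case: A0; exists v.
exists (enorm (G a0) + L * (M + M)) => _ [v Av <-].
rewrite -[G v](subrK (G a0)) (le_trans (enormD _ _)) // addrC lerD //.
rewrite (le_trans (LipG _ _ (AD _ Av) (AD _ Aa0))) // ler_wpM2l //.
by rewrite (le_trans (enormB _ _)) // lerD ?normM.
Qed.

Lemma enorm_le_diam (A : set vec) a b : enorm_bounded A -> A a -> A b ->
  enorm (a - b) <= diam A.
Proof.
move=> [M normM] Aa Ab; apply: sup_upper_bound; last by exists a, b.
split; first by exists (enorm (a - b)), a, b.
exists (M + M) => _ [u [v [Au Av ->]]].
by rewrite (le_trans (enormB u v)) // lerD ?normM.
Qed.

Lemma enorm_le_supnorm (G : vec -> vec) (A : set vec) a :
  enorm_bounded (G @` A) -> A a -> enorm (G a) <= supnorm G A.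
Proof.
move=> [M normM] Aa; apply: sup_upper_bound; last by exists a.
split; first by exists (enorm (G a)), a.
by exists M => _ [v Av ->]; apply: normM; exists v.
Qed.

Lemma diam_ge0 (A : set vec) a : enorm_bounded A -> A a -> 0 <= diam A.
Proof. by move=> bA Aa; apply: le_trans (enorm_ge0 _) (enorm_le_diam bA Aa Aa). Qed.

Lemma supnorm_ge0 (G : vec -> vec) (A : set vec) a :
  enorm_bounded (G @` A) -> A a -> 0 <= supnorm G A.
Proof. by move=> bGA Aa; apply: le_trans (enorm_ge0 _) (enorm_le_supnorm bGA Aa). Qed.

Lemma delta_ge0 (alpha : nat -> R) (x : nat -> vec) k : 0 <= alpha k -> 0 <= delta alpha x k.
Proof. by move=> a0; apply: mulr_ge0 (mulr_ge0 a0 (addr_ge0 ler01 a0)) (sqr_ge0 _). Qed.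

Lemma Gap_ge0_le (F : vec -> vec) (A : set vec) z B : A z ->
  (forall v, A v -> dot (F v) (z - v) <= B) -> 0 <= Gap z F A <= B.
Proof.
move=> Az ub; have gap_z : dot (F z) (z - z) = 0 by rewrite subrr dot0r.
apply/andP; split.
  rewrite -gap_z; apply: sup_upper_bound; last by exists z.
  by split; [exists (dot (F z) (z - z)), z | exists B => _ [v Av ->]; apply: ub].
by apply: ge_sup; [exists (dot (F z) (z - z)), z | move=> _ [v Av ->]; apply: ub].
Qed.

End BoundedSets.

Section WeightedAverage.
Variables (R : realType) (n : nat).
Notation vec := 'rV[R]_n.
Variables (c : nat -> R) (v : nat -> vec).
Hypothesis c_gt0 : forall j, 0 < c j.

Lemma sum_weights_gt0 k : (0 < k)%N -> 0 < \sum_(j < k) c j.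
Proof.
case: k => // k _; rewrite big_ord_recr /= ltr_wpDl ?c_gt0 //.
by rewrite sumr_ge0 // => j _; rewrite ltW.
Qed.

Lemma convex_wavg (A : set vec) k : is_convex A -> (forall j, A (v j)) -> (0 < k)%N ->
  A ((\sum_(j < k) c j)^-1 *: \sum_(j < k) c j *: v j).
Proof.
move=> cvxA Av; elim: k => // -[_ _|k IH _].
  by rewrite !big_ord1 scalerA mulVf ?gt_eqF ?scale1r.
rewrite big_ord_recr /= [\sum_(j < k.+2) c j *: v j]big_ord_recr /=.
move: (IH isT) (sum_weights_gt0 (ltn0Sn k)) (c_gt0 k.+1).
set S := \sum_(j < k.+1) c j; set V := \sum_(j < k.+1) c j *: v j => AV S0 ck.
have -> : (S + c k.+1)^-1 *: (V + c k.+1 *: v k.+1) =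
    (S / (S + c k.+1)) *: (S^-1 *: V) + (1 - S / (S + c k.+1)) *: v k.+1.
  apply/rowP => i; rewrite !mxE; field.
  by rewrite !gt_eqF ?addr_gt0.
apply: cvxA => //; first by rewrite divr_ge0 ?ltW ?addr_gt0.
by rewrite ler_pdivrMr ?addr_gt0 // mul1r lerDl ltW.
Qed.

Lemma dot_wavg (u z : vec) k : (0 < k)%N ->
  dot u ((\sum_(j < k) c j)^-1 *: \sum_(j < k) c j *: v j - z)
  = (\sum_(j < k) c j)^-1 * \sum_(j < k) c j * dot u (v j - z).
Proof.
move=> k0; have S0 := sum_weights_gt0 k0.
have -> : (\sum_(j < k) c j)^-1 *: \sum_(j < k) c j *: v j - z =
    (\sum_(j < k) c j)^-1 *: \sum_(j < k) c j *: (v j - z).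
  under [X in _ = _ *: X]eq_bigr do rewrite scalerBr.
  by rewrite sumrB -scaler_suml scalerBr scalerA mulVf ?gt_eqF ?scale1r.
rewrite dotZr dot_sumr; congr (_ * _).
by apply: eq_bigr => j _; rewrite dotZr.
Qed.

End WeightedAverage.

Section InertialRecursion.
Variables (R : realDomainType) (phi a q e : nat -> R) (D2 : R).
Hypothesis phi_le : forall k, phi k <= D2.
Hypotheses (a_ge0 : forall k, 0 <= a k) (a0_le1 : a 0 <= 1).
Hypotheses (q0 : q 0 = 1) (q_ge0 : forall k, 0 <= q k).
Hypothesis qa_nonincr : forall k, q k.+1 * a k.+1 <= q k * a k.
(* [k.-1] truncates at 0, which encodes phi_{-1} = phi_0. *)
Hypothesis recursion : forall k,
  q k.+1 * phi k.+1 <= q k * ((1 + a k) * phi k - a k * phi k.-1) + e k.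

Lemma inertial_lyapunov k :
  q k * phi k - q k * a k * phi k.-1 <= (1 - q k * a k) * D2 + \sum_(j < k) e j.
Proof.
elim: k => [|k IH].
  rewrite big_ord0 q0 !mul1r addr0 /=.
  have a0' : 0 <= 1 - a 0 by rewrite subr_ge0.
  by have := ler_wpM2l a0' (phi_le 0); lra.
rewrite big_ord_recr /=.
have qa' : 0 <= q k * a k - q k.+1 * a k.+1 by rewrite subr_ge0.
have := ler_wpM2l qa' (phi_le k); have := recursion k; lra.
Qed.

Lemma inertial_recursion_bound k : q k * phi k <= D2 + \sum_(j < k) e j.
Proof.
have := inertial_lyapunov k; have := ler_wpM2l (mulr_ge0 (q_ge0 k) (a_ge0 k)) (phi_le k.-1).
lra.
Qed.

End InertialRecursion.

Section Rate.
Variables (R : realType) (n : nat).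
Notation vec := 'rV[R]_n.
Variables (F H : vec -> vec) (X : set vec) (alpha lambda : nat -> R).
Variables (L eta mu lamlo lamhi : R) (x w y : nat -> vec).

Let beta := parsum (1 - lamhi ^+ 2 * L ^+ 2) (2 * lamlo * eta * mu).
Let b := betak L eta mu lambda.
Let p := pk L eta mu lambda.
Let q := pprev L eta mu lambda.
Let G v := F v + eta *: H v.

Hypotheses (cvxX : is_convex X) (bX : enorm_bounded X) (bHX : enorm_bounded (H @` X)).
Hypotheses (Xx : forall k, X (x k)) (Xy : forall k, X (y k)).
Hypotheses (eta0 : 0 < eta) (lamlo0 : 0 < lamlo) (lam_itv : forall k, lamlo <= lambda k <= lamhi).
Hypothesis b_itv : forall k, beta <= b k < 1.
Hypotheses (alpha_ge0 : forall k, 0 <= alpha k) (alpha0_le1 : alpha 0 <= 1).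
Hypothesis alpha_nonincr : forall k, alpha k.+1 <= (1 - b k) * alpha k.
Hypothesis Ew : forall k, w k = x k + alpha k *: (x k - x k.-1).
Hypothesis step : forall k z, X z ->
  dot (x k.+1 - z) (x k.+1 - z) <=
    (1 - b k) * dot (w k - z) (w k - z) + 2 * lambda k * dot (G z) (z - y k).

Let lambda_gt0 k : 0 < lambda k.
Proof. by have /andP[lo_le _] := lam_itv k; exact: lt_le_trans lo_le. Qed.

Let one_sub_b_gt0 k : 0 < 1 - b k.
Proof. by have /andP[_ b_lt1] := b_itv k; rewrite subr_gt0. Qed.

Let one_sub_beta_gt0 : 0 < 1 - beta.
Proof. by have /andP[beta_le b_lt1] := b_itv 0; rewrite subr_gt0 (le_lt_trans beta_le). Qed.

Lemma pk_gt0 k : 0 < p k.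
Proof. by rewrite invr_gt0 prodr_gt0. Qed.

Lemma pprev_gt0 k : 0 < q k.
Proof. by case: k => [|k]; [exact: ltr01 | exact: pk_gt0]. Qed.

Lemma pk_pprev k : p k * (1 - b k) = q k.
Proof.
rewrite /p /pk big_ord_recr /= invfM -mulrA mulVf ?mulr1 ?gt_eqF //.
by case: k => [|k]; rewrite ?big_ord0 ?invr1.
Qed.

Lemma pk_ge k : ((1 - beta) ^+ k.+1)^-1 <= p k.
Proof.
rewrite lef_pV2 ?posrE ?prodr_gt0 ?exprn_gt0 // -[in X in _ <= X](card_ord k.+1).
rewrite -prodr_const; apply: ler_prod => i _.
by have /andP[beta_le _] := b_itv i; rewrite ltW ?lerB.
Qed.

Lemma dist_extrapolate k z : dot (w k - z) (w k - z) =
  (1 + alpha k) * dot (x k - z) (x k - z) - alpha k * dot (x k.-1 - z) (x k.-1 - z)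
  + delta alpha x k.
Proof.
have -> : w k - z = (1 + alpha k) *: (x k - z) - alpha k *: (x k.-1 - z).
  by rewrite Ew; apply/rowP => i; rewrite !mxE; ring.
by rewrite dot_extrapolate /delta enorm_sqr opprB addrA subrK.
Qed.

Lemma energy_nonneg k z : X z ->
  0 <= diam X ^+ 2 + \sum_(j < k) q j * delta alpha x j
       + \sum_(j < k) p j * (2 * lambda j * dot (G z) (z - y j)).
Proof.
move=> Xz; rewrite -addrA -big_split /=.
set phi := fun j => dot (x j - z) (x j - z).
apply: le_trans (@inertial_recursion_bound R phi alpha q
  (fun j => q j * delta alpha x j + p j * (2 * lambda j * dot (G z) (z - y j)))
  _ _ _ _ _ _ _ _ k).
- by rewrite mulr_ge0 ?dotvv_ge0 ?ltW ?pprev_gt0.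
- move=> j; rewrite /phi -enorm_sqr lerXn2r ?nnegrE ?enorm_ge0 ?enorm_le_diam //.
  exact: le_trans (enorm_ge0 _) (enorm_le_diam bX Xz Xz).
- exact: alpha_ge0.
- exact: alpha0_le1.
- by [].
- by move=> j; rewrite ltW ?pprev_gt0.
- move=> j; change (p j * alpha j.+1 <= q j * alpha j).
  by rewrite -(pk_pprev j) -mulrA ler_pM2l ?pk_gt0.
- move=> j; change (p j * phi j.+1 <= q j * ((1 + alpha j) * phi j - alpha j * phi j.-1)
    + (q j * delta alpha x j + p j * (2 * lambda j * dot (G z) (z - y j)))).
  have := ler_wpM2l (ltW (pk_gt0 j)) (step j Xz).
  rewrite dist_extrapolate mulrDr [p j * ((1 - b j) * _)]mulrA pk_pprev /phi; lra.
Qed.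

Lemma sum_lambda_pk_ge k : (0 < k)%N -> lamlo / (1 - beta) ^+ k <= \sum_(j < k) lambda j * p j.
Proof.
case: k => // k _; rewrite big_ord_recr /= -[X in X <= _]add0r.
apply: lerD; first by apply: sumr_ge0 => j _; rewrite mulr_ge0 ?ltW ?pk_gt0.
have /andP[lo_le _] := lam_itv k.
by rewrite ler_pM ?pk_ge ?(ltW lamlo0) // invr_ge0 exprn_ge0 // ltW.
Qed.

Lemma sum_lambda_pk_dotF_le k z : X z ->
  \sum_(j < k) lambda j * p j * dot (F z) (y j - z)
    <= (diam X ^+ 2 + \sum_(j < k) q j * delta alpha x j) / 2
       + eta * supnorm H X * diam X * \sum_(j < k) lambda j * p j.
Proof.
move=> Xz; have := energy_nonneg k Xz.
have term j : p j * (2 * lambda j * dot (G z) (z - y j)) <=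
    - 2 * (lambda j * p j * dot (F z) (y j - z))
    + 2 * (eta * supnorm H X * diam X) * (lambda j * p j).
  have HD : dot (H z) (z - y j) <= supnorm H X * diam X.
    apply: le_trans (dot_le_enorm _ _) _.
    by rewrite ler_pM ?enorm_ge0 ?(enorm_le_supnorm bHX) ?(enorm_le_diam bX).
  have := ler_wpM2l (ltW (mulr_gt0 (mulr_gt0 (lambda_gt0 j) (pk_gt0 j)) eta0)) HD.
  rewrite /G dotDl dotZl -opprB !dotNr; lra.
have := ler_sum (index_enum 'I_k) (P := xpredT) (fun j _ => term j).
rewrite big_split /= -!mulr_sumr; lra.
Qed.

Lemma dot_ybar k v : (0 < k)%N ->
  dot (F v) (ybar L eta mu lambda y k - v) =
    (\sum_(j < k) lambda j * p j)^-1 * \sum_(j < k) lambda j * p j * dot (F v) (y j - v).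
Proof.
move=> k0; set c := fun j => lambda j * eta * p j.
have c_gt0 j : 0 < c j by rewrite !mulr_gt0 ?pk_gt0.
rewrite (dot_wavg _ c_gt0 _ _ k0).
have -> : \sum_(j < k) c j = eta * \sum_(j < k) lambda j * p j.
  by rewrite mulr_sumr; apply: eq_bigr => j _; rewrite /c; ring.
have -> : \sum_(j < k) c j * dot (F v) (y j - v) =
    eta * \sum_(j < k) lambda j * p j * dot (F v) (y j - v).
  by rewrite mulr_sumr; apply: eq_bigr => j _; rewrite /c; ring.
by rewrite invfM mulrACA mulVf ?gt_eqF // mul1r.
Qed.

Lemma Gap_ybar_rate k : (0 < k)%N ->
  0 <= Gap (ybar L eta mu lambda y k) F X <=
    (1 - beta) ^+ k / (2 * lamlo) * (diam X ^+ 2 + \sum_(j < k) q j * delta alpha x j)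
    + eta * (lamhi * supnorm H X * diam X / lamlo).
Proof.
move=> k0; have c_gt0 j : 0 < lambda j * eta * p j by rewrite !mulr_gt0 ?pk_gt0.
apply: (Gap_ge0_le (convex_wavg c_gt0 cvxX Xy k0)) => v Xv; rewrite dot_ybar //.
set P := \sum_(j < k) lambda j * p j.
set E := diam X ^+ 2 + \sum_(j < k) q j * delta alpha x j.
have P_gt0 : 0 < P := sum_weights_gt0 (fun j => mulr_gt0 (lambda_gt0 j) (pk_gt0 j)) k0.
have E_ge0 : 0 <= E.
  rewrite addr_ge0 ?sqr_ge0 // sumr_ge0 // => j _.
  by rewrite mulr_ge0 ?delta_ge0 // ltW ?pprev_gt0.
have CD_ge0 : 0 <= supnorm H X * diam X.
  by rewrite mulr_ge0 ?(supnorm_ge0 bHX (Xx 0)) ?(diam_ge0 bX (Xx 0)).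
have P_ge : P^-1 <= (1 - beta) ^+ k / lamlo.
  by rewrite -invf_div lef_pV2 ?posrE ?sum_lambda_pk_ge ?divr_gt0 ?exprn_gt0.
have lo_le_hi : 1 <= lamhi / lamlo.
  by have /andP[lo_le le_hi] := lam_itv 0; rewrite ler_pdivlMr // mul1r (le_trans lo_le).
have Pinv_ge0 : 0 <= P^-1 by rewrite invr_ge0 ltW.
apply: le_trans (ler_wpM2l Pinv_ge0 (sum_lambda_pk_dotF_le k Xv)) _; rewrite -/E.
have -> : P^-1 * (E / 2 + eta * supnorm H X * diam X * P)
    = E / 2 * P^-1 + eta * (supnorm H X * diam X).
  by field; rewrite gt_eqF.
have -> : (1 - beta) ^+ k / (2 * lamlo) * E = E / 2 * ((1 - beta) ^+ k / lamlo).
  by field; rewrite gt_eqF.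
have -> : lamhi * supnorm H X * diam X / lamlo = supnorm H X * diam X * (lamhi / lamlo).
  by ring.
apply: lerD; first by rewrite ler_wpM2l ?divr_ge0.
by rewrite ler_pM2l // ler_peMr.
Qed.

End Rate.

Theorem proposition4p17 (R : realType) (n : nat)
  (F H : 'rV[R]_n -> 'rV[R]_n) (DomF DomH X Omega : set 'rV[R]_n)
  (PX POm : 'rV[R]_n -> 'rV[R]_n) (LF LH mu : R)
  (alpha lambda : nat -> R) (eta lamlo lamhi : R)
  (x w w' y : nat -> 'rV[R]_n) :
  0 < LF -> 0 < LH ->
  op_monotone_on DomF F -> op_monotone_on DomH H ->
  op_lipschitz_on DomF F LF -> op_lipschitz_on DomH H LH ->
  0 < mu -> op_strongly_monotone_on DomH H mu ->
  X !=set0 -> compact X -> is_convex X ->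
  Omega !=set0 -> closed Omega -> is_convex Omega ->
  X `<=` Omega -> Omega `<=` DomF `&` DomH ->
  is_proj X PX -> is_proj Omega POm ->
  VI_sol F X !=set0 ->
  0 < eta ->
  0 < lamlo -> lamlo <= lamhi -> lamhi < (LF + eta * LH)^-1 ->
  (forall k, lamlo <= lambda k <= lamhi) ->
  (forall k, 0 <= alpha k) ->
  alpha 0 <= 1 ->
  (forall k, alpha k.+1 <= (1 - betak (LF + eta * LH) eta mu lambda k) * alpha k) ->
  IneIREG X Omega PX POm F H alpha lambda (fun _ => eta) x w w' y ->
  let L := LF + eta * LH in
  let beta := ((1 - lamhi ^+ 2 * L ^+ 2)^-1 + (2 * lamlo * eta * mu)^-1)^-1 in
  (0 < beta < 1) /\
  forall k : nat, (1 <= k)%N ->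
    0 <= Gap (ybar L eta mu lambda y k) F X /\
    Gap (ybar L eta mu lambda y k) F X <=
      (1 - beta) ^+ k / (2 * lamlo) *
        (diam X ^+ 2 + \sum_(j < k) pprev L eta mu lambda j * delta alpha x j)
      + eta * (lamhi * supnorm H X * diam X / lamlo).
Proof.
move=> LF0 LH0 monF _ LipF LipH mu0 smH _ cX cvxX _ _ cvxO XO OD projX projO _ eta0
  lo0 _ hiL lam_itv alpha_ge0 alpha0_le1 alpha_nonincr [Xx0 Ew Ew' Ey Ex] L beta.
have L0 : 0 < L := addr_gt0 LF0 (mulr_gt0 eta0 LH0).
have hiL' : lamhi * L < 1 by rewrite -ltr_pdivlMr // div1r.
have b_itv k := parsum_stepsize_bounds (ltW L0) eta0 mu0 lo0 (lam_itv k) hiL'.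
have [beta0 /andP[beta_le b_lt1]] := b_itv 0.
split; first by rewrite beta0 (le_lt_trans beta_le).
have Xx k : X (x k) by case: k => // k; rewrite Ex; exact: (projX _).1.
have Xy k : X (y k) by rewrite Ey; exact: (projX _).1.
have bX := compact_enorm_bounded cX.
have bHX := lipschitz_image_bounded LipH (ltW LH0) (fun v Xv => (OD _ (XO _ Xv)).2) bX.
move=> k k1; apply/andP.
apply: (Gap_ybar_rate cvxX bX bHX Xx Xy eta0 lo0 lam_itv (fun k => (b_itv k).2)
  alpha_ge0 alpha0_le1 alpha_nonincr Ew _ k1) => j z Xz.
rewrite Ex Ey Ew'.
have lamL : lambda j * L < 1.
  by have /andP[_ l_hi] := lam_itv j; rewrite (le_lt_trans _ hiL') // ler_pM2r.
have lam0 : 0 < lambda j by have /andP[lo_l _] := lam_itv j; exact: lt_le_trans lo_l.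
exact: (extragradient_step monF LipF LipH smH cvxX cvxO projX projO XO OD
  (ltW LF0) (ltW LH0) eta0 mu0 lam0 lamL).
Qed.
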